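(* Let $I_A$ and $I_B$ be two MatP instances with the same underlying graph $G=(W\cup F,E)$ that differ only in the preference order of a single agent $x\in W\cup F$. Let $e=\{x,y\}\in E$ and let $I_H$ be a hybrid instance of $(I_A,I_B)$ with respect to $e$. Let $M$ be a matching with $e\in M$. Then: (1) if $M$ is robust popular with respect to $I_A$ and $I_B$, then $M$ is popular for $I_H$; (2) if $M$ is robust dominant with respect to $I_A$ and $I_B$, then $M$ is dominant for $I_H$.
   Context: An instance $I$ of matchings under preferences (MatP) consists of a bipartite graph $G^I=(W\cup F,E^I)$ with disjoint finite vertex sets $W$ (workers) and $F$ (firms), whose elements are called agents, together with, for each agent $x$, a strict linear order $\succ_x^I$ (preference order) over the set $N_x^I$ of neighbors of $x$ in $G^I$. A matching is a set of pairwise disjoint edges; $M(x)$ denotes the partner of a matched agent $x$. Agent $x$ prefers $M$ over $M'$ if $x$ is matched in $M$ and unmatched in $M'$, or matched in both with $M(x)\succ_x M'(x)$. Define $\mathrm{vote}^I_x(M,M')=1$ if $x$ prefers $M$ over $M'$, $-1$ if $x$ prefers $M'$ over $M$, and $0$ otherwise, and the popularity margin $\phi^I(M,M')=\sum_{x\in W\cup F}\mathrm{vote}^I_x(M,M')$. A matching $M$ of $G^I$ is popular for $I$ if $\phi^I(M,M')\ge 0$ for every matching $M'$ of $G^I$; it is dominant for $I$ if it is popular and $\phi^I(M,M')>0$ for every matching $M'$ of $G^I$ with $|M'|>|M|$. For two instances $I_A,I_B$ on the same agent sets, a matching is robust popular (resp. robust dominant) with respect to $I_A$ and $I_B$ if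 it is popular (resp. dominant) for both $I_A$ and $I_B$. Hybrid instance: suppose $I_A,I_B$ have the same graph $G$ and differ only in the preferences of agent $x$, and let $e=\{x,y\}\in E$. Let $P^A=\{z: z\succ_x^{I_A} y\}$ and $P^B=\{z: z\succ_x^{I_B} y\}$. A hybrid instance $I_H$ of $(I_A,I_B)$ with respect to $e$ is the MatP instance on $G$ in which every agent $z\neq x$ has preference order $\succ_z^{I_A}$, and $x$ has any linear order $\succ'$ on $N_x$ such that $z\succ' y$ for all $z\in P^A\cup P^B$ and $y\succ' z$ for all $z\in N_x\setminus(P^A\cup P^B\cup\{y\})$. *)

From mathcomp Require Import all_boot all_order all_algebra.
Set Implicit Arguments. Unset Strict Implicit. Unset Printing Implicit Defensive.
Import GRing.Theory Num.Theory.
Local Open Scope ring_scope.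

Section MatP.
Variables (W F : finType).

Definition agent := (W + F)%type.

(* The bipartite graph is given by G : W -> F -> bool; a matching is a set of
   edges, each edge {w,f} represented as the pair (w,f). *)
Definition adjT (G : W -> F -> bool) (a b : agent) : bool :=
  match a, b with
  | inl w, inr f => G w f
  | inr f, inl w => G w f
  | _, _ => false
  end.

(* A preference profile: pref x a b  means  a >_x b. *)
Definition prefs := agent -> rel agent.

Definition strict_linear_on (G : W -> F -> bool) (x : agent) (r : rel agent) : Prop :=
  [/\ (forall a b, r a b -> adjT G x a && adjT G x b),
      (forall a, ~~ r a a),
      (forall a b c, r a b -> r b c -> r a c) &
      (forall a b, adjT G x a -> adjT G x b -> a != b -> r a b || r b a)].

Definition valid_instance (G : W -> F -> bool) (p : prefs) : Prop :=
  forall x, strict_linear_on G x (p x).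

Definition is_matching (G : W -> F -> bool) (M : {set W * F}) : Prop :=
  (forall e, e \in M -> G e.1 e.2) /\
  (forall e1 e2, e1 \in M -> e2 \in M -> e1 != e2 ->
      (e1.1 != e2.1) && (e1.2 != e2.2)).

Definition inM (M : {set W * F}) (a b : agent) : bool :=
  match a, b with
  | inl w, inr f => (w, f) \in M
  | inr f, inl w => (w, f) \in M
  | _, _ => false
  end.

Definition prefers (p : prefs) (M M' : {set W * F}) (x : agent) : bool :=
  [exists y, inM M x y && [forall y', inM M' x y' ==> p x y y']].

Definition vote (p : prefs) (M M' : {set W * F}) (x : agent) : int :=
  (prefers p M M' x)%:Z - (prefers p M' M x)%:Z.

Definition margin (p : prefs) (M M' : {set W * F}) : int :=
  \sum_(x : agent) vote p M M' x.

Definition popular (G : W -> F -> bool) (p : prefs) (M : {set W * F}) : Prop :=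
  is_matching G M /\
  forall M', is_matching G M' -> 0 <= margin p M M'.

Definition dominant (G : W -> F -> bool) (p : prefs) (M : {set W * F}) : Prop :=
  popular G p M /\
  forall M', is_matching G M' -> (#|M| < #|M'|)%N -> 0 < margin p M M'.

Definition differ_only_at (pA pB : prefs) (x : agent) : Prop :=
  forall z, z != x -> forall a b, pA z a b = pB z a b.

Definition hybrid (G : W -> F -> bool) (pA pB pH : prefs) (x y : agent) : Prop :=
  [/\ strict_linear_on G x (pH x),
      (forall z, z != x -> forall a b, pH z a b = pA z a b),
      (forall z, pA x z y || pB x z y -> pH x z y) &
      (forall z, adjT G x z -> ~~ (pA x z y || pB x z y) -> z != y -> pH x y z)].

End MatP.

(* The hybrid preferences pH agree with pA (hence with pB) at every agent other
   than x, so for any competing matching M' the three popularity margins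
   differ only in the vote of x.  If x's partner z in M' beats y for pA (resp.
   pB), it beats y for pH too and x votes -1 in both instances; otherwise
   either z = y or y beats z for pH, and x casts its best possible vote in the
   hybrid instance.  Hence margin_H(M, M') dominates margin_A(M, M') or
   margin_B(M, M'), which transfers popularity and dominance. *)
From mathcomp Require Import all_boot all_order all_algebra.
Set Implicit Arguments. Unset Strict Implicit. Unset Printing Implicit Defensive.
Import Order.POrderTheory GRing.Theory Num.Theory.
Local Open Scope ring_scope.

Section Matchings.
Variables (W F : finType).
Implicit Types (G : W -> F -> bool) (M : {set W * F}) (p q r : prefs W F).
Implicit Types (x a b z : agent W F).

Lemma strict_linear_asym G x (rx : rel (agent W F)) a b :
  strict_linear_on G x rx -> rx a b -> ~~ rx b a.
Proof.
by case=> _ irr tr _ hab; apply/negP => hba; move: (irr a); rewrite (tr _ _ _ hab hba).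
Qed.

Lemma inM_functional G M x a b :
  is_matching G M -> inM M x a -> inM M x b -> a = b.
Proof.
case=> _ disj; case: x => [w|f]; case: a => [w1|f1] //; case: b => [w2|f2] //= h1 h2.
- have [-> //|ne] := eqVneq f1 f2.
  have ne' : (w, f1) != (w, f2) by apply: contra ne => /eqP [->].
  by move: (disj _ _ h1 h2 ne'); rewrite eqxx.
- have [-> //|ne] := eqVneq w1 w2.
  have ne' : (w1, f) != (w2, f) by apply: contra ne => /eqP [->].
  by move: (disj _ _ h1 h2 ne'); rewrite eqxx andbF.
Qed.

Lemma inM_adjT G M x a : is_matching G M -> inM M x a -> adjT G x a.
Proof. by case=> edges _; case: x => [w|f]; case: a => [w1|f1] //= /edges. Qed.

Lemma prefers_unmatched p M M' x y :
  inM M x y -> (forall z, ~~ inM M' x z) ->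
  prefers p M M' x /\ ~~ prefers p M' M x.
Proof.
move=> hy hn; split.
  by apply/existsP; exists y; rewrite hy; apply/forallP => z; rewrite (negbTE (hn z)).
by apply/existsP => -[z /andP [hz _]]; move: (hn z); rewrite hz.
Qed.

Lemma vote_unmatched p M M' x y :
  inM M x y -> (forall z, ~~ inM M' x z) -> vote p M M' x = 1.
Proof. by move=> hy hn; rewrite /vote; have [-> /negbTE ->] := prefers_unmatched p hy hn. Qed.

Lemma prefers_matched G p M M' x y z :
  is_matching G M -> is_matching G M' -> inM M x y -> inM M' x z ->
  prefers p M M' x = p x y z.
Proof.
move=> mM mM' hy hz; apply/existsP/idP => [[a /andP [ha /forallP /(_ z)]]|hyz].
  by rewrite hz (inM_functional mM ha hy).
exists y; rewrite hy; apply/forallP => b; apply/implyP => hb.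
by rewrite (inM_functional mM' hb hz).
Qed.

Lemma vote_matched G p M M' x y z :
  is_matching G M -> is_matching G M' -> inM M x y -> inM M' x z ->
  vote p M M' x = (p x y z)%:Z - (p x z y)%:Z.
Proof.
move=> mM mM' hy hz.
by rewrite /vote (prefers_matched p mM mM' hy hz) (prefers_matched p mM' mM hz hy).
Qed.

Lemma vote_eq_at p q M M' z :
  (forall a b, p z a b = q z a b) -> vote p M M' z = vote q M M' z.
Proof.
move=> epq; have eprf N N' : prefers p N N' z = prefers q N N' z.
  by apply: eq_existsb => a; congr (_ && _); apply: eq_forallb => b; rewrite epq.
by rewrite /vote !eprf.
Qed.

Lemma margin_le_vote_at p q M M' x :
  (forall z, z != x -> forall a b, p z a b = q z a b) ->
  vote p M M' x <= vote q M M' x -> margin p M M' <= margin q M M'.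
Proof.
move=> epq hx; rewrite /margin (bigD1 x) //= [leRHS](bigD1 x) //= lerD //.
by rewrite le_eqVlt; apply/orP; left; apply/eqP/eq_bigr => z /epq /vote_eq_at.
Qed.

Lemma popular_of_margin_cover G p q r M :
  (forall M', is_matching G M' ->
     margin p M M' <= margin r M M' \/ margin q M M' <= margin r M M') ->
  popular G p M -> popular G q M -> popular G r M.
Proof.
move=> cover [mM pp] [_ pq]; split => // M' mM'.
by case: (cover M' mM') => h; [exact: le_trans (pp _ mM') h | exact: le_trans (pq _ mM') h].
Qed.

Lemma dominant_of_margin_cover G p q r M :
  (forall M', is_matching G M' ->
     margin p M M' <= margin r M M' \/ margin q M M' <= margin r M M') ->
  dominant G p M -> dominant G q M -> dominant G r M.
Proof.
move=> cover [pp dp] [pq dq]; split; first exact: popular_of_margin_cover pp pq.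
move=> M' mM' larger.
by case: (cover M' mM') => h;
  [exact: lt_le_trans (dp _ mM' larger) h | exact: lt_le_trans (dq _ mM' larger) h].
Qed.

Section Hybrid.
Variables (G : W -> F -> bool) (pA pB pH : prefs W F) (x y : agent W F).
Variable M : {set W * F}.
Hypotheses (vA : valid_instance G pA) (vB : valid_instance G pB).
Hypothesis dAB : differ_only_at pA pB x.
Hypothesis hH : hybrid G pA pB pH x y.
Hypotheses (mM : is_matching G M) (hxy : inM M x y).

Lemma hybrid_vote_x M' : is_matching G M' ->
  vote pA M M' x <= vote pH M M' x \/ vote pB M M' x <= vote pH M M' x.
Proof.
move=> mM'; have [slH _ above below] := hH.
have [z hz|unm] := pickP (inM M' x); last first.
  by left; rewrite !(vote_unmatched _ hxy) // => z; rewrite unm.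
rewrite !(vote_matched _ mM mM' hxy hz).
have loses (p : prefs W F) : strict_linear_on G x (p x) -> p x z y -> pH x z y ->
    (p x y z)%:Z - (p x z y)%:Z <= (pH x y z)%:Z - (pH x z y)%:Z.
  move=> slp hp hpH.
  by rewrite hp hpH (negbTE (strict_linear_asym slp hp)) (negbTE (strict_linear_asym slH hpH)).
have [hA|nA] := orP (orbN (pA x z y)); first by left; apply: (loses _ (vA x) hA); rewrite above ?hA.
have [hB|nB] := orP (orbN (pB x z y)); first by right; apply: (loses _ (vB x) hB); rewrite above ?hB ?orbT.
have [-> | nzy] := eqVneq z y; first by left; rewrite !subrr.
have hyz : pH x y z by apply: below; rewrite ?(negbTE nA) ?(negbTE nB) ?(inM_adjT mM' hz).
by left; rewrite hyz (negbTE (strict_linear_asym slH hyz)) (negbTE nA); case: (pA x y z).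
Qed.

Lemma hybrid_margin_cover M' : is_matching G M' ->
  margin pA M M' <= margin pH M M' \/ margin pB M M' <= margin pH M M'.
Proof.
have [_ eHA _ _] := hH.
move=> /hybrid_vote_x [h|h]; [left|right]; apply: margin_le_vote_at h => z nzx a b.
  by rewrite eHA.
by rewrite eHA // dAB.
Qed.

End Hybrid.

End Matchings.

Theorem lemma2 (W F : finType) (G : W -> F -> bool) (pA pB pH : prefs W F)
  (x y : agent W F) (M : {set W * F}) :
  valid_instance G pA -> valid_instance G pB ->
  differ_only_at pA pB x ->
  adjT G x y ->
  hybrid G pA pB pH x y ->
  is_matching G M -> inM M x y ->
  ((popular G pA M /\ popular G pB M) -> popular G pH M) /\
  ((dominant G pA M /\ dominant G pB M) -> dominant G pH M).
Proof.
move=> vA vB dAB _ hH mM hxy.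
have cover := hybrid_margin_cover vA vB dAB hH mM hxy.
by split=> -[hA hB]; [exact: popular_of_margin_cover hA hB | exact: dominant_of_margin_cover hA hB].
Qed.
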